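(* Let $\mathcal{C}\subseteq\mathcal{I}$ and let $f$ be a monotone and subadditive set function on subsets of $\mathcal{I}$ with nonnegative real values. Then the answer-dependent pricing function $p(\mathbf{Q},E)=f(\overline{\mathcal{S}}_{\mathbf{Q}}(E)\cap\mathcal{C})$ is arbitrage-free.
   Context: $\mathcal{I}$ is a countable nonempty set of database instances; queries are deterministic functions on $\mathcal{I}$; a query bundle is a finite tuple of queries from a language $\mathcal{L}$, evaluated componentwise; $B(\mathcal{L})$ is the set of bundles, closed under concatenation; $E$ ranges over $\{\mathbf{Q}(D):D\in\mathcal{I}\}$. Conflict set: $\overline{\mathcal{S}}_{\mathbf{Q}}(E)=\{D'\in\mathcal{I}:\mathbf{Q}(D')\ne E\}$. $f$ monotone: $A\subseteq B\Rightarrow f(A)\le f(B)$; subadditive: $f(A\cup B)\le f(A)+f(B)$. An answer-dependent pricing function $p$ is arbitrage-free if (i) for every $D\in\mathcal{I}$ and bundles $\mathbf{Q}_1,\mathbf{Q}_2$, if every $D'\in\mathcal{I}$ with $\mathbf{Q}_2(D')=\mathbf{Q}_2(D)$ satisfies $\mathbf{Q}_1(D')=\mathbf{Q}_1(D)$, then $p(\mathbf{Q}_2,\mathbf{Q}_2(D))\ge p(\mathbf{Q}_1,\mathbf{Q}_1(D))$; and (ii) for every $D$, $p(\mathbf{Q},\mathbf{Q}(D))\le p(\mathbf{Q}_1,\mathbf{Q}_1(D))+p(\mathbf{Q}_2,\mathbf{Q}_2(D))$ where $\mathbf{Q}=\mathbf{Q}_1,\mathbf{Q}_2$. *)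

From Stdlib Require Import Reals List.
Open Scope R_scope.

(* Queries: deterministic functions I -> V over a common answer domain V.  A bundle is a finite list
   of queries of L, evaluated componentwise; concatenation is (++). *)

Definition countable (I : Type) : Prop :=
  exists enc : I -> nat, forall x y, enc x = enc y -> x = y.

Definition query (I V : Type) := I -> V.

Definition bundle (I V : Type) := list (query I V).

Definition in_B {I V} (L : query I V -> Prop) (Q : bundle I V) : Prop :=
  Forall L Q.

Definition eval {I V} (Q : bundle I V) (D : I) : list V :=
  map (fun q => q D) Q.

Definition iset (I : Type) := I -> Prop.

Definition subset {I} (A B : iset I) : Prop := forall x, A x -> B x.
Definition union {I} (A B : iset I) : iset I := fun x => A x \/ B x.
Definition inter {I} (A B : iset I) : iset I := fun x => A x /\ B x.

Definition monotone {I} (f : iset I -> R) : Prop :=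
  forall A B, subset A B -> f A <= f B.
Definition subadditive {I} (f : iset I -> R) : Prop :=
  forall A B, f (union A B) <= f A + f B.
Definition nonneg_fun {I} (f : iset I -> R) : Prop := forall A, 0 <= f A.

Definition conflict {I V} (Q : bundle I V) (E : list V) : iset I :=
  fun D' => eval Q D' <> E.

Definition pricing (I V : Type) := bundle I V -> list V -> R.

Definition arbitrage_free {I V} (L : query I V -> Prop) (p : pricing I V) : Prop :=
  (forall (D : I) (Q1 Q2 : bundle I V), in_B L Q1 -> in_B L Q2 ->
     (forall D' : I, eval Q2 D' = eval Q2 D -> eval Q1 D' = eval Q1 D) ->
     p Q2 (eval Q2 D) >= p Q1 (eval Q1 D)) /\
  (forall (D : I) (Q1 Q2 : bundle I V), in_B L Q1 -> in_B L Q2 ->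
     p (Q1 ++ Q2) (eval (Q1 ++ Q2) D) <= p Q1 (eval Q1 D) + p Q2 (eval Q2 D)).

Definition conflict_price {I V} (C : iset I) (f : iset I -> R) : pricing I V :=
  fun Q E => f (inter (conflict Q E) C).

From Stdlib Require Import Reals List Classical.
Open Scope R_scope.

(* Both conditions reduce to inclusions between conflict sets: an instance that
   disagrees with D on a determined bundle disagrees on the determining one, and
   an instance that disagrees on Q1 ++ Q2 disagrees on Q1 or on Q2.  Monotonicity
   and subadditivity of f then transfer these inclusions to the prices. *)

Lemma eval_app {I V} (Q1 Q2 : bundle I V) (D : I) :
  eval (Q1 ++ Q2) D = eval Q1 D ++ eval Q2 D.
Proof. apply map_app. Qed.

Lemma subset_inter_l {I} (A B C : iset I) :
  subset A B -> subset (inter A C) (inter B C).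
Proof. intros HAB x [Hx Hc]; split; auto. Qed.

Lemma inter_union_distr_r {I} (A B C : iset I) :
  subset (inter (union A B) C) (union (inter A C) (inter B C)).
Proof. intros x [[Hx | Hx] Hc]; [left | right]; split; assumption. Qed.

Lemma conflict_determined {I V} (Q1 Q2 : bundle I V) (D : I) :
  (forall D' : I, eval Q2 D' = eval Q2 D -> eval Q1 D' = eval Q1 D) ->
  subset (conflict Q1 (eval Q1 D)) (conflict Q2 (eval Q2 D)).
Proof. intros Hdet x Hx E2; exact (Hx (Hdet x E2)). Qed.

Lemma conflict_app {I V} (Q1 Q2 : bundle I V) (D : I) :
  subset (conflict (Q1 ++ Q2) (eval (Q1 ++ Q2) D))
         (union (conflict Q1 (eval Q1 D)) (conflict Q2 (eval Q2 D))).
Proof.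
  intros x Hx.
  destruct (classic (eval Q1 x = eval Q1 D)) as [E1 | E1]; [right | left];
    [| exact E1].
  intro E2; apply Hx; rewrite !eval_app, E1, E2; reflexivity.
Qed.

Lemma subadditive_monotone_cover {I} (f : iset I -> R) (X A B : iset I) :
  monotone f -> subadditive f -> subset X (union A B) -> f X <= f A + f B.
Proof. intros Hm Hs HX; apply Rle_trans with (f (union A B)); auto. Qed.

Theorem lemma23 (I V : Type) (Hcount : countable I) (Hne : inhabited I)
  (L : query I V -> Prop) (C : iset I) (f : iset I -> R) :
  monotone f -> subadditive f -> nonneg_fun f ->
  arbitrage_free L (conflict_price C f).
Proof.
  intros Hm Hs _; unfold conflict_price; split.
  - intros D Q1 Q2 _ _ Hdet.
    apply Rle_ge, Hm, subset_inter_l, conflict_determined, Hdet.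
  - intros D Q1 Q2 _ _.
    apply subadditive_monotone_cover; [exact Hm | exact Hs |].
    intros x Hx; apply inter_union_distr_r.
    exact (subset_inter_l _ _ C (conflict_app Q1 Q2 D) x Hx).
Qed.
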